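(* Let $E$ be a real Banach space, $K\subset E$ nonempty closed convex, $Y$ a real Banach space containing a closed, convex, pointed cone $C$ with nonempty interior, $f:E\times E\to Y$, $T:K\to\mathcal P(K)$, and $g\in\mathcal F$ satisfying H1–H4, with B1–B4 holding. If Algorithm SEML stops at the $k$-th iteration (i.e. $z^k=v^k$), then $x^k$ is a solution of the vector quasi-equilibrium problem, i.e. $x^k\in T(x^k)$ and $f(x^k,y)\notin-\mathrm{int}(C)$ for all $y\in T(x^k)$.
   Context: $C^+=\{z\in Y^*:\langle y,z\rangle\ge0\ \forall y\in C\}$; $y\preceq y'$ iff $y'-y\in C$; $C$-convex: $G(tx+(1-t)y)\preceq tG(x)+(1-t)G(y)$. $\mathcal F$: functions $g:E\to\mathbb R$ strictly convex, lower semicontinuous, Gâteaux differentiable with derivative $g'$. $D_g(x,y)=g(x)-g(y)-\langle x-y,g'(y)\rangle$; $v_g(x,t)=\inf\{D_g(y,x):\|y-x\|=t\}$. H1: level sets of $D_g(x,\cdot)$ bounded; H2: $\inf_{x\in A}v_g(x,t)>0$ for $t>0$, bounded $A$; H3: $g'$ uniformly continuous on bounded sets; H4: $\lim_{\|x\|\to\infty}(g(x)-\rho\|x-z\|)=\infty$ for all $z$, $\rho>0$. $\Pi^g_D(x)$: unique minimizer of $D_g(\cdot,x)$ over nonempty closed convex $D$. B1: $f(x,x)=0$. B2: $f$ uniformly continuous on bounded subsets of $E\times E$. B3: $f(x,\cdot)$ $C$-convex. B4: $T$ has nonempty closed convex values, is demiclosed, lower semicontinuous at each point of $K$, and quasi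 $D_g$-nonexpansive (definitions: demiclosed means $x^k\rightharpoonup\bar x$, $d(x^k,T(x^k))\to0\Rightarrow\bar x\in T(\bar x)$; lower semicontinuous at $\bar x$ means $x^k\to\bar x$, $\bar y\in T(\bar x)\Rightarrow\exists y^k\in T(x^k)$ with $y^k\to\bar y$; quasi $D_g$-nonexpansive means $S(x)=\Pi^g_{T(x)}(x)$ has a fixed point and $D_g(p,S(x))\le D_g(p,x)$ for fixed points $p$ of $S$, $x\in K$). $\mathrm{argmin}^C_w\{G(y):y\in Q\}$: $a\in Q$ with no $y\in Q$ such that $G(a)-G(y)\in\mathrm{int}(C)$. Algorithm SEML: parameters $v^0\in K$, $\delta,\theta\in(0,1)$, $\{\beta_k\}\subset[\hat\beta,\tilde\beta]$ with $0<\hat\beta\le\tilde\beta$, $\{\gamma_k\}\subset[\varepsilon,1]$, $\varepsilon\in(0,1]$, $\{e^k\}\subset\mathrm{int}(C)$, $e^k\to\bar e\in\mathrm{int}(C)$. Given $v^k$: $x^k=\Pi^g_{T(v^k)}(v^k)$; $z^k\in\mathrm{argmin}^C_w\{\beta_kf(x^k,y)+g(y)e^k-\langle y,g'(x^k)\rangle e^k:y\in T(v^k)\}$; stop if $z^k=v^k$; else $\ell(k)=\min\{\ell\ge0:-\beta_kf(y^\ell,x^k)+\beta_kf(y^\ell,z^k)+\delta D_g(z^k,x^k)e^k\notin\mathrm{int}(C)\}$, $y^\ell=\theta^\ell z^k+(1-\theta^\ell)x^k$; $\alpha_k=\theta^{\ell(k)}$; $y^k=\alpha_kz^k+(1-\alpha_k)x^k$;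 $H_k=\{y:f(y^k,y)\in-C\}$; $K_0=K\cap H_0$, $K_k=K_{k-1}\cap H_k$; $w^k=\Pi^g_{K_k}(x^k)$; $v^{k+1}=\Pi^g_{L_k\cap M_k\cap N_k}(v^0)$ with $L_k=\{z:\langle z-x^k,g'(x^k)-g'(w^k)\rangle\le-\gamma_kD_g(x^k,w^k)\}$, $M_k=\{z:\langle z-v^k,g'(v^k)-g'(x^k)\rangle\le-\gamma_kD_g(v^k,x^k)\}$, $N_k=\{z:\langle z-v^k,g'(v^0)-g'(v^k)\rangle\le0\}$. *)

From HB Require Import structures.
From mathcomp Require Import all_boot all_order all_algebra.
From mathcomp Require Import all_classical all_reals all_analysis.
Set Implicit Arguments. Unset Strict Implicit. Unset Printing Implicit Defensive.
Import Order.TTheory GRing.Theory Num.Theory.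
Import numFieldNormedType.Exports.
Local Open Scope classical_set_scope.
Local Open Scope ring_scope.

Section Defs.
Context {R : realType}.

Definition convex_sub {V : normedModType R} (A : set V) : Prop :=
  forall x y (t : R), A x -> A y -> 0 <= t -> t <= 1 ->
    A (t *: x + (1 - t) *: y).

Definition bounded_sub {V : normedModType R} (A : set V) : Prop :=
  exists M : R, forall x, A x -> `|x| <= M.

Definition cont_linear_functional {V : normedModType R} (phi : V -> R) : Prop :=
  (forall (a : R) (x y : V), phi (a *: x + y) = a * phi x + phi y) /\ continuous phi.

Definition weak_cvg {V : normedModType R} (u : nat -> V) (x : V) : Prop :=
  forall phi : V -> R, cont_linear_functional phi -> (phi \o u) @ \oo --> phi x.

(* d(x^k, A^k) -> 0, with d(x,A) = inf_{a in A} ||x - a|| *)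
Definition dist_to_zero {V : normedModType R} (u : nat -> V) (A : nat -> set V) : Prop :=
  forall eps : R, 0 < eps -> \forall k \near \oo, exists a, A k a /\ `|u k - a| < eps.

Definition strictly_convex {V : normedModType R} (g : V -> R) : Prop :=
  forall x y (t : R), x != y -> 0 < t -> t < 1 ->
    g (t *: x + (1 - t) *: y) < t * g x + (1 - t) * g y.

Definition lower_semicont {V : normedModType R} (g : V -> R) : Prop :=
  forall x (a : R), a < g x -> \forall y \near x, a < g y.

(* g is Gateaux differentiable with derivative g' : E -> E^*,
   <h, g'(x)> is written g' x h *)
Definition gateaux_derivative {V : normedModType R} (g : V -> R) (g' : V -> V -> R) : Prop :=
  forall x, cont_linear_functional (g' x) /\
    forall h, (fun t : R => t^-1 * (g (x + t *: h) - g x)) @ 0^' --> g' x h.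

Definition in_class_F {V : normedModType R} (g : V -> R) (g' : V -> V -> R) : Prop :=
  [/\ strictly_convex g, lower_semicont g & gateaux_derivative g g'].

Definition Dg {V : normedModType R} (g : V -> R) (g' : V -> V -> R) (x y : V) : R :=
  g x - g y - g' y (x - y).

Definition H1 {V : normedModType R} (g : V -> R) g' : Prop :=
  forall (x : V) (r : R), bounded_sub [set y | Dg g g' x y <= r].

(* H2: inf_{x in A} v_g(x,t) > 0 for t > 0 and bounded A, where
   v_g(x,t) = inf { D_g(y,x) : ||y - x|| = t } *)
Definition H2 {V : normedModType R} (g : V -> R) g' : Prop :=
  forall (A : set V) (t : R), bounded_sub A -> 0 < t ->
    exists c : R, 0 < c /\
      forall x y, A x -> `|y - x| = t -> c <= Dg g g' y x.

(* H3: g' uniformly continuous on bounded sets (w.r.t. the dual norm) *)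
Definition H3 {V : normedModType R} (g' : V -> V -> R) : Prop :=
  forall (A : set V), bounded_sub A -> forall eps : R, 0 < eps ->
    exists delta : R, 0 < delta /\
      forall x y, A x -> A y -> `|x - y| < delta ->
        forall h, `|g' x h - g' y h| <= eps * `|h|.

Definition H4 {V : normedModType R} (g : V -> R) : Prop :=
  forall (z : V) (rho : R), 0 < rho -> forall M : R,
    exists N : R, forall x, N < `|x| -> M < g x - rho * `|x - z|.

(* p = Pi^g_D(x): the (unique) minimizer of D_g(., x) over D *)
Definition is_bproj {V : normedModType R} (g : V -> R) g' (D : set V) (x p : V) : Prop :=
  D p /\ forall y, D y -> Dg g g' p x <= Dg g g' y x.

Definition is_cone {W : normedModType R} (C : set W) : Prop :=
  forall (t : R) c, 0 <= t -> C c -> C (t *: c).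

Definition pointed {W : normedModType R} (C : set W) : Prop :=
  forall c, C c -> C (- c) -> c = 0.

Definition C_convex {V W : normedModType R} (C : set W) (G : V -> W) : Prop :=
  forall x y (t : R), 0 <= t -> t <= 1 ->
    C (t *: G x + (1 - t) *: G y - G (t *: x + (1 - t) *: y)).

Definition weak_argmin {V W : normedModType R} (C : set W) (G : V -> W) (Q : set V) (a : V) : Prop :=
  Q a /\ ~ (exists y, Q y /\ interior C (G a - G y)).

Definition B1 {V W : normedModType R} (f : V -> V -> W) : Prop :=
  forall x, f x x = 0.

Definition B2 {V W : normedModType R} (f : V -> V -> W) : Prop :=
  forall M : R, forall eps : R, 0 < eps -> exists delta : R, 0 < delta /\
    forall x y x' y', `|x| <= M -> `|y| <= M -> `|x'| <= M -> `|y'| <= M ->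
      `|x - x'| < delta -> `|y - y'| < delta -> `|f x y - f x' y'| < eps.

Definition B3 {V W : normedModType R} (C : set W) (f : V -> V -> W) : Prop :=
  forall x, C_convex C (f x).

Definition demiclosed {V : normedModType R} (K : set V) (T : V -> set V) : Prop :=
  forall (u : nat -> V) (xb : V), (forall k, K (u k)) ->
    weak_cvg u xb -> dist_to_zero u (fun k => T (u k)) -> T xb xb.

Definition lsc_multi_at {V : normedModType R} (K : set V) (T : V -> set V) (xb : V) : Prop :=
  forall (u : nat -> V) (yb : V), (forall k, K (u k)) -> u @ \oo --> xb -> T xb yb ->
    exists w : nat -> V, (forall k, T (u k) (w k)) /\ w @ \oo --> yb.

(* quasi D_g-nonexpansive: S(x) = Pi^g_{T(x)}(x) has a fixed point and
   D_g(p, S(x)) <= D_g(p, x) for fixed points p of S and x in K *)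
Definition quasi_Dg_nonexpansive {V : normedModType R} (g : V -> R) g'
    (K : set V) (T : V -> set V) : Prop :=
  (exists p, K p /\ is_bproj g g' (T p) p p) /\
  forall p x s, K p -> is_bproj g g' (T p) p p -> K x -> is_bproj g g' (T x) x s ->
    Dg g g' p s <= Dg g g' p x.

Definition B4 {V : normedModType R} (g : V -> R) g' (K : set V) (T : V -> set V) : Prop :=
  [/\ forall x, K x -> [/\ T x `<=` K, T x !=set0, closed (T x) & convex_sub (T x)],
      demiclosed K T,
      (forall xb, K xb -> lsc_multi_at K T xb) &
      quasi_Dg_nonexpansive g g' K T].

Definition seml_obj {V W : normedModType R} (g : V -> R) g' (f : V -> V -> W)
    (betak : R) (ek : W) (xk : V) : V -> W :=
  fun y => betak *: f xk y + (g y - g' xk y) *: ek.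

(* the Armijo-type condition defining l(k) *)
Definition seml_ls {V W : normedModType R} (g : V -> R) g' (C : set W) (f : V -> V -> W)
    (betak delta theta : R) (ek : W) (xk zk : V) (l : nat) : Prop :=
  let yl := theta ^+ l *: zk + (1 - theta ^+ l) *: xk in
  ~ interior C (- (betak *: f yl xk) + betak *: f yl zk + (delta * Dg g g' zk xk) *: ek).

Definition seml_K {V W : normedModType R} (C : set W) (f : V -> V -> W) (K : set V)
    (yseq : nat -> V) (k : nat) : set V :=
  [set u | K u /\ forall i, (i <= k)%N -> C (- f (yseq i) u)].

Definition seml_L {V : normedModType R} (g : V -> R) g' (gam : R) (xk wk : V) : set V :=
  [set u | g' xk (u - xk) - g' wk (u - xk) <= - (gam * Dg g g' xk wk)].
Definition seml_M {V : normedModType R} (g : V -> R) g' (gam : R) (vk xk : V) : set V :=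
  [set u | g' vk (u - vk) - g' xk (u - vk) <= - (gam * Dg g g' vk xk)].
Definition seml_N {V : normedModType R} (g' : V -> V -> R) (v0 vk : V) : set V :=
  [set u | g' v0 (u - vk) - g' vk (u - vk) <= 0].

Definition seml_step {V W : normedModType R} (g : V -> R) g' (C : set W)
    (f : V -> V -> W) (K : set V) (T : V -> set V)
    (delta theta : R) (beta gam : nat -> R) (e : nat -> W)
    (v x z y w : nat -> V) (alpha : nat -> R) (ell : nat -> nat) (j : nat) : Prop :=
  K (v j) /\
  is_bproj g g' (T (v j)) (v j) (x j) /\
  weak_argmin C (seml_obj g g' f (beta j) (e j) (x j)) (T (v j)) (z j) /\
  z j <> v j /\
  (seml_ls g g' C f (beta j) delta theta (e j) (x j) (z j) (ell j) /\
    (forall l, (l < ell j)%N -> ~ seml_ls g g' C f (beta j) delta theta (e j) (x j) (z j) l)) /\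
  alpha j = theta ^+ ell j /\
  y j = alpha j *: z j + (1 - alpha j) *: x j /\
  is_bproj g g' (seml_K C f K y j) (x j) (w j) /\
  is_bproj g g' (seml_L g g' (gam j) (x j) (w j) `&` seml_M g g' (gam j) (v j) (x j)
                   `&` seml_N g' (v 0%N) (v j)) (v 0%N) (v j.+1).

Definition seml_stops_at {V W : normedModType R} (g : V -> R) g' (C : set W)
    (f : V -> V -> W) (K : set V) (T : V -> set V)
    (delta theta : R) (beta gam : nat -> R) (e : nat -> W)
    (v x z y w : nat -> V) (alpha : nat -> R) (ell : nat -> nat) (k : nat) : Prop :=
  (forall j, (j < k)%N -> seml_step g g' C f K T delta theta beta gam e v x z y w alpha ell j) /\
  [/\ K (v k),
      is_bproj g g' (T (v k)) (v k) (x k),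
      weak_argmin C (seml_obj g g' f (beta k) (e k) (x k)) (T (v k)) (z k) &
      z k = v k].

End Defs.

From HB Require Import structures.
From mathcomp Require Import all_boot all_order all_algebra.
From mathcomp Require Import all_classical all_reals all_analysis.
From mathcomp Require Import lra ring.
Import Order.TTheory GRing.Theory Num.Theory.
Import numFieldNormedType.Exports.
Local Open Scope classical_set_scope.
Local Open Scope ring_scope.

(* If z^k = v^k then v^k lies in T(v^k), so the Bregman projection x^k of v^k
   onto T(v^k) is v^k itself, as D_g(x, y) > 0 for x <> y by strict convexity.
   Hence x^k is a fixed point of T. If moreover f(x^k, u) were in -int(C) for
   some u in T(x^k), then along y = x^k + t (u - x^k) the difference between
   the SEML objective at x^k and at y equals, up to an element of C coming
   from C-convexity of f(x^k, .), t (-beta f(x^k, u) - (D_g(y, x^k) / t) e^k);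
   since D_g(y, x^k) / t -> 0 as t -> 0+ by Gateaux differentiability, this
   lies in int(C) for small t, contradicting weak minimality of x^k. *)

Section Cone.
Context {R : realType} {W : normedModType R} (C : set W).
Hypotheses (convC : convex_sub C) (coneC : is_cone C).

Lemma cone_addr_closed a b : C a -> C b -> C (a + b).
Proof.
move=> Ca Cb.
have := coneC 2 _ _ (convC a b 2^-1 Ca Cb _ _).
rewrite scalerDr !scalerA mulfV ?pnatr_eq0 // scale1r.
have -> : 2 * (1 - 2^-1) = 1 :> R by field.
by rewrite scale1r; apply; lra.
all: lra.
Qed.

Lemma interior_cone_addr a c : interior C a -> C c -> interior C (a + c).
Proof.
rewrite /interior /= => /nbhs_normP [r r0 Ca] Cc; apply/nbhs_normP.
exists r => // y ay; rewrite -(subrK c y); apply: cone_addr_closed => //.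
by apply: Ca; rewrite /ball_ /= opprB addrA.
Qed.

Lemma interior_cone_scale t a : 0 < t -> interior C a -> interior C (t *: a).
Proof.
rewrite /interior /= => t0 /nbhs_normP [r r0 Ca]; apply/nbhs_normP.
exists (t * r); first exact: mulr_gt0.
move=> y ay; rewrite -[y](scalerKV (lt0r_neq0 t0)).
apply: coneC; first exact: ltW.
apply: Ca; rewrite /ball_ /= -[a](scalerK (lt0r_neq0 t0)) -scalerBr.
by rewrite normrZ gtr0_norm ?invr_gt0 // ltr_pdivrMl.
Qed.

End Cone.

Section LinearFunctional.
Context {R : realType} {V : normedModType R} {phi : V -> R}.
Hypothesis phi_lin : cont_linear_functional phi.

Lemma clf0 : phi 0 = 0.
Proof. by have := phi_lin.1 1 0 0; rewrite scale1r addr0 mul1r; lra. Qed.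

Lemma clfZ t h : phi (t *: h) = t * phi h.
Proof. by have := phi_lin.1 t h 0; rewrite !addr0 clf0 addr0. Qed.

Lemma clfB u h : phi (u - h) = phi u - phi h.
Proof. by have := phi_lin.1 (-1) h u; rewrite scaleN1r addrC => ->; rewrite mulN1r addrC. Qed.

End LinearFunctional.

Section Bregman.
Context {R : realType} {V : normedModType R} {g : V -> R} {g' : V -> V -> R}.
Hypothesis g'_gateaux : gateaux_derivative g g'.

Lemma segmentE (t : R) (u x : V) : t *: u + (1 - t) *: x = x + t *: (u - x).
Proof. by rewrite scalerBr scalerBl scale1r addrCA. Qed.

Lemma gateaux_quotient_near x h (r : R) : 0 < r ->
  exists2 t : R, 0 < t < 2^-1 & `|g' x h - t^-1 * (g (x + t *: h) - g x)| < r.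
Proof.
move=> r0; have /cvgrPdist_lt/(_ r r0)/nbhs_normP[d /= d0 near_d] := (g'_gateaux x).2 h.
pose t := Num.min (d / 2) 4^-1.
have t0 : 0 < t by rewrite lt_min divr_gt0 //= invr_gt0.
have td : t < d by rewrite /t gt_min ltr_pdivrMr //; apply/orP; left; lra.
exists t; first by rewrite t0 /t gt_min ltf_pV2 ?posrE //; apply/orP; right; lra.
by apply: near_d; [rewrite /ball_ /= sub0r normrN gtr0_norm | rewrite gt_eqF].
Qed.

Lemma Dg_ii x : Dg g g' x x = 0.
Proof. by rewrite /Dg !subrr (clf0 (g'_gateaux x).1) subr0. Qed.

Lemma Dg_segment_quotient x h (t : R) : t != 0 ->
  Dg g g' (x + t *: h) x / t = t^-1 * (g (x + t *: h) - g x) - g' x h.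
Proof.
move=> t0; rewrite /Dg [x + _ - x]addrC addKr (clfZ (g'_gateaux x).1); field.
by rewrite t0.
Qed.

Lemma Dg_segment_small x h (r : R) : 0 < r ->
  exists2 t : R, 0 < t < 1 & `|Dg g g' (x + t *: h) x / t| < r.
Proof.
move=> r0; have [t /andP[t0 t2] near_t] := gateaux_quotient_near x h _ r0.
exists t; first by rewrite t0 /=; lra.
by rewrite Dg_segment_quotient ?gt_eqF // distrC.
Qed.

Hypothesis g_strict : strictly_convex g.

(* Comparing the chord from y to the midpoint m of [y, x] with the chord from
   y to x shows that the difference quotients at y in direction x - y stay a
   fixed amount below g x - g y. *)
Lemma Dg_gt0 x y : x != y -> 0 < Dg g g' x y.
Proof.
move=> xy; rewrite /Dg subr_gt0.
set m := 2^-1 *: x + (1 - 2^-1) *: y.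
have mid : g m < 2^-1 * g x + (1 - 2^-1) * g y by apply: g_strict => //; lra.
set s := 2^-1 * g x + (1 - 2^-1) * g y - g m.
have s0 : 0 < s by rewrite subr_gt0.
have [t /andP[t0 t2] near_t] := gateaux_quotient_near y (x - y) _ s0.
have my : m != y.
  apply: contra xy; rewrite /m segmentE -subr_eq0 addrC addKr scaler_eq0.
  by rewrite invr_eq0 pnatr_eq0 subr_eq0.
have segm : (2 * t) *: m + (1 - 2 * t) *: y = y + t *: (x - y).
  rewrite /m scalerDr !scalerA -addrA -scalerDl -segmentE.
  have -> : 2 * t * 2^-1 = t by field.
  by have -> : 2 * t * (1 - 2^-1) + (1 - 2 * t) = 1 - t by field.
have chord : g (y + t *: (x - y)) < 2 * t * g m + (1 - 2 * t) * g y.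
  by rewrite -segm; apply: g_strict => //; lra.
have quot : t^-1 * (g (y + t *: (x - y)) - g y) < 2 * (g m - g y).
  by rewrite ltr_pdivrMl // mulrA (mulrC t); lra.
move: near_t; rewrite ltr_norml => /andP[_ near_t].
have half : 2^-1 = 1 / 2 :> R by rewrite div1r.
have sE : s = 2^-1 * g x + (1 - 2^-1) * g y - g m by [].
lra.
Qed.

Lemma bproj_id D x p : is_bproj g g' D x p -> D x -> p = x.
Proof.
move=> [_ p_min] Dx; apply/eqP; apply: contraT => px.
by have := p_min x Dx; rewrite Dg_ii leNgt Dg_gt0.
Qed.

End Bregman.

Section SemlObjective.
Context {R : realType} {V W : normedModType R} (C : set W).
Context (g : V -> R) (g' : V -> V -> R) (f : V -> V -> W).
Hypotheses (convC : convex_sub C) (coneC : is_cone C).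
Hypothesis g'_gateaux : gateaux_derivative g g'.

Lemma seml_obj_subr (b : R) e x u : f x x = 0 ->
  seml_obj g g' f b e x x - seml_obj g g' f b e x u = - (b *: f x u) - Dg g g' u x *: e.
Proof.
move=> fxx; rewrite /seml_obj fxx scaler0 add0r opprD addrCA -scalerBl -scaleNr.
by rewrite /Dg (clfB (g'_gateaux x).1) -scaleNr; congr (_ + _ *: _); ring.
Qed.

Lemma weak_argmin_seml_obj_solves Q x b e :
    convex_sub Q -> f x x = 0 -> C_convex C (f x) -> 0 < b -> interior C e ->
    weak_argmin C (seml_obj g g' f b e x) Q x ->
  forall u, Q u -> ~ interior C (- f x u).
Proof.
move=> Q_convex fxx fx_convex b0 Ce [Qx x_min] u Qu Cfu; apply: x_min.
have : interior C (- (b *: f x u)) by rewrite -scalerN; apply: interior_cone_scale.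
move=> /nbhs_interior/nbhs_normP[r /= r0 near_fu].
have er0 : 0 < r / (`|e| + 1) by rewrite divr_gt0 // ltr_pwDr.
have [t /andP[t0 t1] Dt] := Dg_segment_small g'_gateaux x (u - x) _ er0.
set y := x + t *: (u - x) in Dt.
exists y; split; first by rewrite /y -segmentE; apply: Q_convex => //; lra.
set a := - (b *: f x u) - (Dg g g' y x / t) *: e.
have Ca : interior C a.
  apply: near_fu; rewrite /ball_ /= /a opprB addrC subrK normrZ.
  move: Dt; rewrite ltr_pdivlMr ?ltr_pwDr // => Dt.
  have := normr_ge0 (Dg g g' y x / t); have := normr_ge0 e; nra.
have residual : C (b *: (t *: f x u + (1 - t) *: f x x - f x y)).
  by apply: coneC; [exact: ltW | rewrite /y -segmentE; apply: fx_convex; lra].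
suff -> : seml_obj g g' f b e x x - seml_obj g g' f b e x y =
    t *: a + b *: (t *: f x u + (1 - t) *: f x x - f x y).
  by apply: interior_cone_addr => //; apply: interior_cone_scale.
rewrite seml_obj_subr // /a fxx scaler0 addr0 !scalerBr scalerN !scalerA.
have -> : t * (Dg g g' y x / t) = Dg g g' y x by field; rewrite gt_eqF.
by rewrite (mulrC b t) addrACA addNr add0r addrC.
Qed.

End SemlObjective.

Theorem proposition3p5 (R : realType)
  (E Y : completeNormedModType R)
  (K : set E) (C : set Y) (f : E -> E -> Y) (T : E -> set E)
  (g : E -> R) (g' : E -> E -> R)
  (* standing assumptions *)
  (hK0 : K !=set0) (hKc : closed K) (hKcv : convex_sub K)
  (hCc : closed C) (hCcv : convex_sub C) (hCcone : is_cone C) (hCp : pointed C)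
  (hCint : interior C !=set0)
  (hF : in_class_F g g') (hH1 : H1 g g') (hH2 : H2 g g') (hH3 : H3 g') (hH4 : H4 g)
  (hB1 : B1 f) (hB2 : B2 f) (hB3 : B3 C f) (hB4 : B4 g g' K T)
  (* parameters of Algorithm SEML *)
  (delta theta : R) (beta gam : nat -> R) (e : nat -> Y) (ebar : Y)
  (betah betat eps : R)
  (hdelta : 0 < delta < 1) (htheta : 0 < theta < 1)
  (hbeta0 : 0 < betah) (hbeta1 : betah <= betat)
  (hbeta : forall k, betah <= beta k <= betat)
  (heps : 0 < eps <= 1) (hgam : forall k, eps <= gam k <= 1)
  (he : forall k, interior C (e k)) (hecvg : e @ \oo --> ebar) (hebar : interior C ebar)
  (* iterates of Algorithm SEML *)
  (v x z y w : nat -> E) (alpha : nat -> R) (ell : nat -> nat)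
  (hv0 : K (v 0%N)) (k : nat)
  (hstop : seml_stops_at g g' C f K T delta theta beta gam e v x z y w alpha ell k) :
  T (x k) (x k) /\ forall u, T (x k) u -> ~ interior C (- f (x k) u).
Proof.
case: hstop => _ [Kv proj_x argmin_z zv].
case: hF => g_strict _ g'_gateaux; case: hB4 => T_values _ _ _.
have [_ _ _ T_convex] := T_values (v k) Kv.
have Tvv : T (v k) (v k) by case: argmin_z; rewrite zv.
have xv : x k = v k := bproj_id g'_gateaux g_strict _ _ _ proj_x Tvv.
rewrite xv; split=> //.
have beta0 : 0 < beta k by have := hbeta k; lra.
by rewrite xv zv in argmin_z; apply: weak_argmin_seml_obj_solves argmin_z.
Qed.
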